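(* Let $2\le n\le m$ be integers and let $T_{n,m}=C_n\,\Box\, C_m$. Then $T_{n,m}$ is a connected highly-regular graph, and it is not distance-regular unless $(n,m)\in\{(2,2),(2,4),(3,3),(4,4)\}$.
   Context: For $n\ge3$, $C_n$ is the cycle graph on $n$ vertices; $C_2$ denotes the graph with two vertices joined by a single edge. The Cartesian product $\Gamma_1\Box\Gamma_2$ has vertex set $V(\Gamma_1)\times V(\Gamma_2)$, with $(u_1,v_1)\sim(u_2,v_2)$ iff ($u_1=u_2$ and $v_1\sim v_2$) or ($v_1=v_2$ and $u_1\sim u_2$). A graph $\Gamma$ of order $N$ is highly-regular with collapsed adjacency matrix $C=[c_{i,j}]_{1\le i,j\le M}$, where $2\le M<N$ (the value $M=N$ allowed only when $N=2$), if for every vertex $u$ there is a partition of $V(\Gamma)$ into nonempty sets $V_1(u)=\{u\},\dots,V_M(u)$ such that every $y\in V_j(u)$ is adjacent to exactly $c_{i,j}$ vertices of $V_i(u)$. A connected graph is distance-regular if for all $u,v$ the numbers $|D_1(v)\cap D_{i-1}(u)|$, $|D_1(v)\cap D_i(u)|$, $|D_1(v)\cap D_{i+1}(u)|$ depend only on $i=d(u,v)$, where $D_i(u)=\{v:d(u,v)=i\}$. *)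

From mathcomp Require Import all_boot.
Set Implicit Arguments. Unset Strict Implicit. Unset Printing Implicit Defensive.

(* Cycle C_n on vertex set 'I_n: i ~ j iff j = i+1 (mod n) or i = j+1 (mod n).
   For n >= 3 this is the cycle graph; for n = 2 it is the single edge 0 -- 1. *)
Definition cycle_adj (n : nat) : rel 'I_n :=
  fun i j => (val j == (val i).+1 %% n) || (val i == (val j).+1 %% n).

Definition box_adj (T1 T2 : finType) (e1 : rel T1) (e2 : rel T2) : rel (T1 * T2) :=
  fun p q => ((p.1 == q.1) && e2 p.2 q.2) || ((p.2 == q.2) && e1 p.1 q.1).

Definition torus_adj (n m : nat) : rel ('I_n * 'I_m) :=
  box_adj (@cycle_adj n) (@cycle_adj m).
Arguments torus_adj n m : clear implicits.
Arguments cycle_adj n : clear implicits.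

Definition connected_graph (T : finType) (e : rel T) : Prop :=
  forall x y : T, connect e x y.

(* The partition V_1(u),...,V_M(u) is encoded by a labelling
   f : T -> 'I_M, with V_{i+1}(u) = f^{-1}(i); index 0 plays the role of V_1(u) = {u}. *)
Definition highly_regular_with (T : finType) (e : rel T) (M : nat)
    (C : 'I_M -> 'I_M -> nat) : Prop :=
  ((2 <= M < #|T|) \/ (M = #|T| /\ #|T| = 2)) /\
  forall u : T, exists f : T -> 'I_M,
    (forall i : 'I_M, exists x : T, f x = i) /\
    (forall x : T, (val (f x) == 0) = (x == u)) /\
    (forall (i j : 'I_M) (y : T), f y = j ->
       #|[set x : T | (f x == i) && e x y]| = C i j).

Definition highly_regular (T : finType) (e : rel T) : Prop :=
  exists M (C : 'I_M -> 'I_M -> nat), highly_regular_with e C.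

Fixpoint walkn (T : finType) (e : rel T) (k : nat) (x y : T) : bool :=
  match k with
  | 0 => x == y
  | k'.+1 => [exists z, e x z && walkn e k' z y]
  end.

Definition dist_set (T : finType) (e : rel T) (i : nat) (u : T) : {set T} :=
  [set v | walkn e i u v && [forall j : 'I_i, ~~ walkn e j u v]].

Definition dist_set_pred (T : finType) (e : rel T) (i : nat) (u : T) : {set T} :=
  if i is i'.+1 then dist_set e i' u else set0.

Definition nbhd (T : finType) (e : rel T) (v : T) : {set T} := [set x | e v x].

Definition distance_regular (T : finType) (e : rel T) : Prop :=
  connected_graph e /\
  exists c a b : nat -> nat,
    forall (u v : T) (i : nat), v \in dist_set e i u ->
      [/\ #|nbhd e v :&: dist_set_pred e i u| = c i,
          #|nbhd e v :&: dist_set e i u| = a i &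
          #|nbhd e v :&: dist_set e i.+1 u| = b i].

(* Translations make the torus vertex-transitive, and the stabiliser of 0 contains a
   non-trivial involution: the reflection (a, b) |-> (a, -b) when m >= 3, the swap
   (a, b) |-> (b, a) when n = m = 2.  Labelling each vertex x by its orbit {x, s x} under
   that involution and transporting the labelling along translations gives, for every
   vertex, a partition whose adjacency counts do not depend on the vertex: automorphisms
   preserve them.
   For distance-regularity, the number of common neighbours of two vertices depends only
   on their distance.  An edge of C_3 lies in a triangle while an edge of C_k, k <> 3,
   does not, so n = 3 iff m = 3; and when m >= 5 the vertices (1, 1) and (0, 2) are both
   at distance 2 from (0, 0) but have 2 and 1 common neighbours with it, so m <= 4. *)

From mathcomp Require Import all_boot all_algebra perm zify.
Import GRing.Theory.

Set Implicit Arguments.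
Unset Strict Implicit.
Unset Printing Implicit Defensive.

Lemma connect_homo (T1 T2 : finType) (e1 : rel T1) (e2 : rel T2) (f : T1 -> T2) :
  {homo f : x y / e1 x y >-> e2 x y} -> {homo f : x y / connect e1 x y >-> connect e2 x y}.
Proof.
move=> hf x _ /connectP [p hp ->]; apply/connectP.
by exists (map f p); [exact: homo_path hp | rewrite last_map].
Qed.

Lemma box_connected (T1 T2 : finType) (e1 : rel T1) (e2 : rel T2) :
  connected_graph e1 -> connected_graph e2 -> connected_graph (box_adj e1 e2).
Proof.
move=> conn1 conn2 [x1 x2] [y1 y2]; apply: (@connect_trans _ _ (y1, x2)).
  apply: (@connect_homo _ _ e1 _ (fun a => (a, x2))) => // a b ab.
  by rewrite /box_adj eqxx ab orbT.
by apply: (@connect_homo _ _ e2 _ (pair y1)) => // a b ab; rewrite /box_adj eqxx ab.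
Qed.

Lemma exists_rank_in (L : finType) (A : {set L}) (a : L) : a \in A ->
  exists r : L -> 'I_#|A|,
    [/\ {in A &, injective r}, forall i, exists2 l, l \in A & r l = i & val (r a) = 0].
Proof.
move=> aA; have A_gt0 : 0 < #|A| by apply/card_gt0P; exists a.
pose r l := tperm (enum_rank_in aA a) (Ordinal A_gt0) (enum_rank_in aA l).
exists r; split; last by rewrite /r tpermL.
- by move=> l l' lA l'A /perm_inj /(can_in_inj (enum_rankK_in aA)); apply.
- move=> i; exists (enum_val (tperm (enum_rank_in aA a) (Ordinal A_gt0) i)).
    exact: enum_valP.
  by rewrite /r enum_valK_in tpermK.
Qed.

Section GraphAut.
Variables (T : finType) (e : rel T).

Definition graph_aut (phi : T -> T) := bijective phi /\ {mono phi : x y / e x y}.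

Lemma graph_aut_id : graph_aut id.
Proof. by split=> //; exists id. Qed.

Lemma graph_aut_inv phi psi :
  graph_aut phi -> cancel phi psi -> cancel psi phi -> graph_aut psi.
Proof.
move=> [_ mono_phi] phiK psiK; split; first by exists phi.
by move=> x y; rewrite -mono_phi !psiK.
Qed.

Lemma graph_aut_comp phi psi : graph_aut phi -> graph_aut psi -> graph_aut (phi \o psi).
Proof.
move=> [bij_phi mono_phi] [bij_psi mono_psi]; split; first exact: bij_comp.
by move=> x y /=; rewrite mono_phi mono_psi.
Qed.

Lemma card_labelled_nbhd_aut (L : finType) (f1 f2 : T -> L) phi (i : L) (y : T) :
  graph_aut phi -> f2 \o phi =1 f1 ->
  #|[set x | (f1 x == i) && e x y]| = #|[set x | (f2 x == i) && e x (phi y)]|.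
Proof.
move=> [[psi phiK psiK] mono_phi] f21.
rewrite -(card_imset _ (can_inj phiK)); apply: eq_card => x; rewrite inE.
apply/imsetP/idP => [[z]|/andP [fx exy]].
  rewrite inE => /andP [fz ezy] ->.
  by rewrite -[f2 _]/((f2 \o phi) z) f21 mono_phi fz ezy.
exists (psi x); last by rewrite psiK.
by rewrite inE -f21 /= psiK fx -mono_phi psiK exy.
Qed.

(* The partition attached to u is the labelling pulled back along an automorphism t
   with t o = u.  Since two vertices with the same label are exchanged by a
   label-preserving automorphism, the counts do not depend on the vertex chosen in a
   class; ranking the labels so that the label of o gets rank 0 only serves to match
   the encoding of the partitions by ordinals. *)
Lemma highly_regular_of_labelling (L : finType) (g : T -> L) (o : T) :
  (forall u, exists2 t, graph_aut t & t o = u) ->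
  (forall x, g x = g o -> x = o) ->
  (forall z z', g z = g z' ->
     exists phi, [/\ graph_aut phi, phi z = z' & g \o phi =1 g]) ->
  2 <= #|g @: [set: T]| < #|T| ->
  highly_regular e.
Proof.
move=> trans g_o orbits card_labels.
have [r [r_inj r_onto r_o]] := exists_rank_in (imset_f g (in_setT o)).
have r_eq z z' : (r (g z) == r (g z')) = (g z == g z').
  by apply/eqP/eqP => [/r_inj|->]; [apply; exact: imset_f|].
pose rep j := odflt o [pick z | r (g z) == j].
have r_rep j : r (g (rep j)) = j.
  rewrite /rep; case: pickP => [z /eqP //|none].
  have [_ /imsetP [z _ ->] rz] := r_onto j.
  by move: (none z); rewrite rz eqxx.
exists #|g @: [set: T]|, (fun i j => #|[set x | (r (g x) == i) && e x (rep j)]|).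
split; first by left.
move=> u; have [t aut_t tou] := trans u; have [[t' tK t'K] _] := aut_t.
exists (fun x => r (g (t' x))); split; [|split].
- move=> i; have [_ /imsetP [z _ ->] rz] := r_onto i.
  by exists (t z); rewrite tK.
- move=> x; rewrite -r_o val_eqE r_eq.
  by apply/eqP/eqP => [/g_o t'x|->]; [rewrite -(t'K x) t'x | rewrite -tou tK].
- move=> i j y ryj.
  have /eqP := ryj; rewrite -{1}(r_rep j) r_eq => /eqP /orbits [phi [aut_phi phiy g_phi]].
  rewrite -phiy.
  apply: (card_labelled_nbhd_aut (f2 := r \o g) (phi := phi \o t')).
    exact: graph_aut_comp aut_phi (graph_aut_inv aut_t tK t'K).
  by move=> x /=; rewrite -[g (phi _)]/((g \o phi) _) g_phi.
Qed.

Lemma highly_regular_of_involution (o : T) (s : T -> T) :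
  (forall u, exists2 t, graph_aut t & t o = u) ->
  {mono s : x y / e x y} -> involutive s -> s o = o -> (exists x, s x != x) ->
  highly_regular e.
Proof.
move=> trans mono_s sK so [x0 sx0].
have aut_s : graph_aut s by split; [exact: inv_bij|].
pose g x := [set x; s x].
have g_s : g \o s =1 g by move=> x; rewrite /g /= sK setUC.
have g_o x : g x = g o -> x = o.
  move=> gx; have : x \in g o by rewrite -gx set21.
  by rewrite /g so setUid => /set1P.
have x0o : x0 != o by apply: contraNneq sx0 => ->; rewrite so.
apply: (@highly_regular_of_labelling _ g o) => //.
  move=> z z' gz; have : z' \in g z by rewrite gz set21.
  case/set2P=> ->; first by exists id; split=> //; exact: graph_aut_id.
  by exists s.
apply/andP; split.
  have g_x0 : g o != g x0 by apply: contra_neq x0o => /esym /g_o.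
  apply: leq_trans (subset_leq_card (_ : [set g o; g x0] \subset _)).
    by rewrite cards2 g_x0.
  by apply/subsetP => _ /set2P [] ->; exact: imset_f.
rewrite -cardsT ltn_neqAle leq_imset_card andbT; apply/negP => /imset_injP g_inj.
by move: sx0; rewrite (g_inj _ _ (in_setT _) (in_setT _) (g_s x0)) eqxx.
Qed.

End GraphAut.

Section DistanceRegular.
Variables (T : finType) (e : rel T).
Hypothesis e_irr : irreflexive e.

Lemma dist_set1 u : dist_set e 1 u = nbhd e u.
Proof.
apply/setP => x; rewrite !inE /=.
apply/andP/idP => [[/existsP [z /andP [uz /eqP <-]] _] //|ux].
split; first by apply/existsP; exists x; rewrite ux eqxx.
apply/forallP => j; rewrite (ord1 j) /=.
by apply: contraL ux => /eqP <-; rewrite e_irr.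
Qed.

Lemma mem_dist_set2 u z v :
  e u z -> e z v -> u != v -> ~~ e u v -> v \in dist_set e 2 u.
Proof.
move=> uz zv uv nuv; rewrite inE /=; apply/andP; split.
  by apply/existsP; exists z; rewrite uz; apply/existsP; exists v; rewrite zv eqxx.
apply/forallP => -[[|[|//]] ?] //=; apply/existsP => -[w /andP [uw /eqP wv]].
by move: nuv; rewrite -wv uw.
Qed.

Lemma distance_regular_common_adj u v u' v' : distance_regular e ->
  e u v -> e u' v' -> #|nbhd e u :&: nbhd e v| = #|nbhd e u' :&: nbhd e v'|.
Proof.
move=> [_ [c [a [b dr]]]] uv u'v'.
have common_a x y : e x y -> #|nbhd e x :&: nbhd e y| = a 1.
  move=> xy; have xy1 : y \in dist_set e 1 x by rewrite dist_set1 inE.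
  by have [_ <- _] := dr x y 1 xy1; rewrite dist_set1 setIC.
by rewrite !common_a.
Qed.

Lemma distance_regular_common_dist2 u v u' v' : distance_regular e ->
  v \in dist_set e 2 u -> v' \in dist_set e 2 u' ->
  #|nbhd e u :&: nbhd e v| = #|nbhd e u' :&: nbhd e v'|.
Proof.
move=> [_ [c [a [b dr]]]] uv u'v'.
have common_c x y : y \in dist_set e 2 x -> #|nbhd e x :&: nbhd e y| = c 2.
  by move=> xy; have [<- _ _] := dr x y 2 xy; rewrite /= dist_set1 setIC.
by rewrite !common_c.
Qed.

End DistanceRegular.

Section ZmodCycle.
Variable r : nat.
Implicit Types i j c : 'I_r.+2.
Local Open Scope ring_scope.

Lemma cycle_adjE i j : cycle_adj r.+2 i j = (j == i + 1) || (i == j + 1).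
Proof. by rewrite /cycle_adj -!val_eqE /= (modn_small (_ : 1 < r.+2)%N) // !addn1. Qed.

Lemma cycle_adjDr c i j : cycle_adj r.+2 (i + c) (j + c) = cycle_adj r.+2 i j.
Proof. by rewrite !cycle_adjE !(addrAC _ c) !(can_eq (addrK c)). Qed.

Lemma cycle_adjN i j : cycle_adj r.+2 (- i) (- j) = cycle_adj r.+2 i j.
Proof.
have E a b : (- a == - b + 1 :> 'I_r.+2) = (b == a + 1).
  by rewrite -subr_eq -opprD eqr_opp eq_sym.
by rewrite !cycle_adjE !E orbC.
Qed.

Lemma cycle_adj_irr i : cycle_adj r.+2 i i = false.
Proof.
by rewrite cycle_adjE orbb -[X in X == _]addr0 (can_eq (addKr i)) -val_eqE /= modn_small.
Qed.

Lemma cycle_adj_succ i : cycle_adj r.+2 i (i + 1).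
Proof. by rewrite cycle_adjE eqxx. Qed.

End ZmodCycle.

Lemma cycle_connected n : connected_graph (cycle_adj n).
Proof.
case: n => [[]//|[|r] i j]; first by rewrite (ord1 i) (ord1 j) connect0.
have walk k : connect (cycle_adj r.+2) i (i + k%:R)%R.
  elim: k => [|k IH]; first by rewrite addr0.
  by apply: connect_trans IH (connect1 _); rewrite mulrS addrCA (addrC 1%R) cycle_adj_succ.
by have := walk (val (j - i)%R); rewrite natr_Zp addrC subrK.
Qed.

Lemma cycle_adj_natE k (i j : 'I_k) : cycle_adj k i j =
  [|| val j == i + 1, (i + 1 == k) && (val j == 0),
      val i == j + 1 | (j + 1 == k) && (val i == 0)].
Proof.
have succ_mod x y : x < k -> y < k ->
    (x == y.+1 %% k) = (x == y + 1) || (y + 1 == k) && (x == 0).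
  move=> xk yk; case: (ltngtP y.+1 k) => [lt|gt|eq].
  - by rewrite modn_small //; lia.
  - lia.
  - by rewrite -eq modnn; lia.
by rewrite /cycle_adj !succ_mod ?ltn_ord // -orbA.
Qed.

Section Torus.
Variables p q : nat.
Local Notation n := p.+2.
Local Notation m := q.+2.
Local Notation e := (torus_adj n m).
Implicit Types x y c : 'I_n * 'I_m.
Local Open Scope ring_scope.

Lemma torus_adj_irr : irreflexive e.
Proof. by move=> x; rewrite /torus_adj /box_adj !cycle_adj_irr !andbF. Qed.

Lemma torus_adjDr c : {mono +%R^~ c : x y / e x y}.
Proof.
by move=> x y; rewrite /torus_adj /box_adj /= !cycle_adjDr !(can_eq (addrK _)).
Qed.

Lemma torus_translation_aut c : graph_aut e (+%R^~ c).
Proof.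
split; last exact: torus_adjDr.
by exists (fun x => x - c); [exact: addrK | exact: subrK].
Qed.

Lemma torus_transitive u : exists2 t, graph_aut e t & t 0 = u.
Proof. by exists (+%R^~ u); [exact: torus_translation_aut | rewrite add0r]. Qed.

Lemma torus_highly_regular : (2 < m)%N -> highly_regular e.
Proof.
move=> m_gt2; pose s x := (x.1, - x.2).
apply: (@highly_regular_of_involution _ e 0 s); first exact: torus_transitive.
- by move=> x y; rewrite /torus_adj /box_adj /= cycle_adjN (inj_eq oppr_inj).
- by move=> [x1 x2]; rewrite /s /= opprK.
- by rewrite /s /= oppr0.
exists (0, 1); rewrite /s /= xpair_eqE eqxx /= -val_eqE /=.
rewrite !modn_small; lia.
Qed.

End Torus.

Lemma square_torus_highly_regular p : highly_regular (torus_adj p.+2 p.+2).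
Proof.
pose s (x : 'I_p.+2 * 'I_p.+2) := (x.2, x.1).
apply: (@highly_regular_of_involution _ (torus_adj p.+2 p.+2) 0%R s).
  exact: torus_transitive.
- by move=> x y; rewrite /torus_adj /box_adj /= orbC.
- by case.
- by [].
by exists (1, 0)%R.
Qed.

Ltac torus_lia := rewrite /torus_adj /box_adj /= ?cycle_adj_natE -?val_eqE /=; lia.

Section TorusDistanceRegular.
Variables p q : nat.
Local Notation n := p.+2.
Local Notation m := q.+2.
Local Notation e := (torus_adj n m).
Local Notation o := (ord0 : 'I_n, ord0 : 'I_m).
Local Notation i1 := (Ordinal (isT : 1 < n)).
Local Notation j1 := (Ordinal (isT : 1 < m)).

Lemma torus_common_row : (0 < #|nbhd e o :&: nbhd e (i1, ord0)|) = (n == 3).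
Proof.
apply/card_gt0P/eqP => [[[x1 x2]]|n3].
  by rewrite !inE; move: (ltn_ord x1) (ltn_ord x2); torus_lia.
have two_n : 2 < n by rewrite n3.
by exists (Ordinal two_n, ord0); rewrite !inE; torus_lia.
Qed.

Lemma torus_common_col : (0 < #|nbhd e o :&: nbhd e (ord0, j1)|) = (m == 3).
Proof.
apply/card_gt0P/eqP => [[[x1 x2]]|m3].
  by rewrite !inE; move: (ltn_ord x1) (ltn_ord x2); torus_lia.
have two_m : 2 < m by rewrite m3.
by exists (ord0, Ordinal two_m); rewrite !inE; torus_lia.
Qed.

Lemma torus_distance_regular_eq3 : distance_regular e -> (n == 3) = (m == 3).
Proof.
move=> dr; rewrite -torus_common_row -torus_common_col.
rewrite (distance_regular_common_adj (@torus_adj_irr p q) dr (u' := o) (v' := (ord0, j1))) //.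
all: torus_lia.
Qed.

Lemma torus_diag_dist2 : (i1, j1) \in dist_set e 2 o.
Proof. by apply: (mem_dist_set2 (z := (i1, ord0))); torus_lia. Qed.

Lemma torus_common_diag : 1 < #|nbhd e o :&: nbhd e (i1, j1)|.
Proof.
apply: leq_trans (subset_leq_card (_ : [set (i1, ord0); (ord0, j1)] \subset _)).
  by rewrite cards2.
by apply/subsetP => x; rewrite !inE => /orP [] /eqP ->; torus_lia.
Qed.

Section LongCycle.
Hypothesis m_gt4 : 4 < m.
Local Notation j2 := (Ordinal (ltn_trans (isT : 2 < 4) m_gt4)).

Lemma torus_col2_dist2 : (ord0, j2) \in dist_set e 2 o.
Proof. by apply: (mem_dist_set2 (z := (ord0, j1))); torus_lia. Qed.

Lemma torus_common_col2_le1 : #|nbhd e o :&: nbhd e (ord0, j2)| <= 1.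
Proof.
apply: leq_trans (subset_leq_card (_ : _ \subset [set (ord0, j1)])) _; last by rewrite cards1.
apply/subsetP => -[x1 x2].
by rewrite !inE xpair_eqE; move: (ltn_ord x1) (ltn_ord x2); torus_lia.
Qed.

End LongCycle.

Lemma torus_distance_regular_le4 : distance_regular e -> m <= 4.
Proof.
move=> dr; rewrite leqNgt; apply/negP => m_gt4.
have := torus_common_diag; have := torus_common_col2_le1 m_gt4.
have dist2 := torus_col2_dist2 m_gt4.
by rewrite (distance_regular_common_dist2 (@torus_adj_irr p q) dr torus_diag_dist2 dist2); lia.
Qed.

End TorusDistanceRegular.

Theorem propositionA1 (n m : nat) (h2n : 2 <= n) (hnm : n <= m) :
  connected_graph (torus_adj n m) /\
  highly_regular (torus_adj n m) /\
  (distance_regular (torus_adj n m) ->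
     (n, m) \in [:: (2, 2); (2, 4); (3, 3); (4, 4)]).
Proof.
case: n h2n hnm => [|[|p]] // _; case: m => [|[|q]] // le_pq.
split; first by apply: box_connected; exact: cycle_connected.
split.
  case: q le_pq => [|q] le_pq; last exact: torus_highly_regular.
  by case: p le_pq => [|//] _; exact: square_torus_highly_regular.
move=> dr; have := torus_distance_regular_eq3 dr; have := torus_distance_regular_le4 dr.
by case: p q le_pq {dr} => [|[|[|p]]] [|[|[|q]]].
Qed.
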